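(* Let $k\ge 2$, positive integers $n_1,\dots,n_k$, and functions $f_{ij}:\mathbb{R}^{n_j}\to\mathbb{R}^{n_i}$ ($1\le j<i\le k$) be given, and let $\chi_i^*$ ($i=1,\dots,k-1$) be defined by $$\chi_i^*(\nu_{i:k})=\sup_{z_i\in\mathbb{R}^{n_i}}\Big(\nu_i^T z_i+\sum_{j=i+1}^{k}\nu_j^T f_{ji}(z_i)\Big).$$ Let $\|\cdot\|$ be a norm on $\mathbb{R}^{n_1}$ with dual norm $\|\cdot\|_*$, let $x\in\mathbb{R}^{n_1}$, $\epsilon>0$, $\mathcal B(x)=\{x+\Delta:\|\Delta\|\le\epsilon\}$, and $c\in\mathbb{R}^{n_k}$. Suppose that for each $i=1,\dots,k-1$ we are given functions $g_{ij}:\mathbb{R}^{n_j}\to\mathbb{R}^{n_i}$ for $j=i+1,\dots,k$ and a function $h_i:\mathbb{R}^{n_i}\times\cdots\times\mathbb{R}^{n_k}\to\mathbb{R}$ such that for every $\nu_{i+1:k}$, setting $\nu_i=\sum_{j=i+1}^k g_{ij}(\nu_j)$, we have $$\chi_i^*(-\nu_i,\nu_{i+1:k})\le h_i(\nu_{i:k}).$$ Define $\nu_{1:k}$ (the ''dual network'' applied to $c$) by $\nu_k=-c$ and $\nu_i=\sum_{j=i+1}^{k} g_{ij}(\nu_j)$ for $i=k-1,\dots,1$, and let $$J(x,\nu_{1:k})=-\nu_1^T x-\epsilon\|\nu_1\|_*-\sum_{i=1}^{k-1}h_i(\nu_{i:k}).$$ Then $J(x,\nu_{1:k})$ is a lower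 bound on the value of the problem $$\min\; c^T z_k\quad\text{subject to}\quad z_i=\sum_{j=1}^{i-1}f_{ij}(z_j)\ (i=2,\dots,k),\quad z_1\in\mathcal B(x);$$ that is, $c^T z_k\ge J(x,\nu_{1:k})$ for every feasible $z_{1:k}$.
   Context: Notation: $(\cdot)_{a:b}$ denotes the tuple $((\cdot)_a,\dots,(\cdot)_b)$. The constraints $z_i=\sum_{j<i}f_{ij}(z_j)$ describe a generalized $k$-layer network with arbitrary skip connections and output $z_k$; in the adversarial application $c=e_{y^\star}-e_{y^{\mathrm{targ}}}$ for a true label $y^\star$ and a target label $y^{\mathrm{targ}}$. The dual norm is $\|v\|_*=\sup_{\|\Delta\|\le 1}v^T\Delta$. *)

From mathcomp Require Import ssreflect ssrbool ssrfun eqtype ssrnat seq fintype bigop.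
From Stdlib Require Import Reals.
Set Implicit Arguments. Unset Strict Implicit.

Open Scope R_scope.

Definition vec (m : nat) := 'I_m -> R.

Definition vzero (m : nat) : vec m := fun _ => 0.
Definition vadd (m : nat) (u v : vec m) : vec m := fun t => u t + v t.
Definition vopp (m : nat) (u : vec m) : vec m := fun t => - u t.
Definition vsub (m : nat) (u v : vec m) : vec m := fun t => u t - v t.
Definition vscale (m : nat) (a : R) (u : vec m) : vec m := fun t => a * u t.

Definition dot (m : nat) (u v : vec m) : R := \big[Rplus/0]_(t < m%nat) (u t * v t).

Definition is_norm (m : nat) (N : vec m -> R) : Prop :=
  (forall v, 0 <= N v) /\
  (forall v, N v = 0 -> v = @vzero m) /\
  (forall a v, N (vscale a v) = Rabs a * N v) /\
  (forall u v, N (vadd u v) <= N u + N v).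

Definition is_dual_norm (m : nat) (N dn : vec m -> R) : Prop :=
  forall v, is_lub (fun y => exists d, N d <= 1 /\ y = dot v d) (dn v).

Definition vsum (m a b : nat) (F : nat -> vec m) : vec m :=
  \big[@vadd m/@vzero m]_(a <= j < b) F j.

Definition rsum (a b : nat) (F : nat -> R) : R :=
  \big[Rplus/0]_(a <= j < b) F j.

(* The set whose supremum is chi_i^*(mu_i, nu_{i+1:k}):
   { mu^T z + sum_{j=i+1}^k nu_j^T f_{ji}(z) : z in R^{n_i} } *)
Definition chi_set (n : nat -> nat) (k i : nat)
  (f : forall a b : nat, vec (n b) -> vec (n a))
  (mu : vec (n i)) (nu : forall j : nat, vec (n j)) : R -> Prop :=
  fun y => exists z : vec (n i),
    y = dot mu z + rsum i.+1 k.+1 (fun j => dot (nu j) (f j i z)).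

(* chi_i^*(mu, nu_{i+1:k}) <= h, i.e. the supremum (in the extended reals) of
   chi_set is at most h, i.e. h is an upper bound of chi_set. *)
Definition chi_star_le (n : nat -> nat) (k i : nat)
  (f : forall a b : nat, vec (n b) -> vec (n a))
  (mu : vec (n i)) (nu : forall j : nat, vec (n j)) (h : R) : Prop :=
  forall y, chi_set k f mu nu y -> y <= h.

(* Weak duality by telescoping.  For a feasible z, the bound on chi_i^* evaluated at
   z_i gives h_i >= -nu_i^T z_i + sum_(j>i) nu_j^T f_ji(z_i).  Summing over i and
   exchanging the double sum, the feasibility constraints turn the right-hand side into
   sum_(j>=2) nu_j^T z_j - sum_(i<k) nu_i^T z_i = nu_k^T z_k - nu_1^T z_1, with
   nu_k^T z_k = -c^T z_k.  Finally nu_1^T z_1 <= nu_1^T x + eps ||nu_1||_* because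
   (z_1 - x)/eps lies in the unit ball of the norm. *)
From HB Require Import structures.
From mathcomp Require Import ssreflect ssrbool ssrfun eqtype ssrnat seq fintype bigop.
From Stdlib Require Import Reals Lra.
Open Scope R_scope.

Lemma RplusA : associative Rplus. Proof. by move=> *; ring. Qed.
HB.instance Definition _ := Monoid.isComLaw.Build R 0 Rplus RplusA Rplus_comm Rplus_0_l.

Lemma big_Ropp (I : Type) (r : seq I) (P : pred I) (F : I -> R) :
  \big[Rplus/0]_(i <- r | P i) - F i = - \big[Rplus/0]_(i <- r | P i) F i.
Proof. by symmetry; apply: (big_morph Ropp (id1 := 0) (op1 := Rplus)) => [x y|]; lra. Qed.

Lemma big_Rmult_l (I : Type) (r : seq I) (P : pred I) (a : R) (F : I -> R) :
  \big[Rplus/0]_(i <- r | P i) (a * F i) = a * \big[Rplus/0]_(i <- r | P i) F i.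
Proof. by symmetry; apply: (big_morph (Rmult a) (id1 := 0) (op1 := Rplus)) => [x y|]; ring. Qed.

Section Dot.

Variable m : nat.
Implicit Types (u v w : vec m).

Lemma dot_vaddr u v w : dot u (vadd v w) = dot u v + dot u w.
Proof. by rewrite /dot -big_split /=; apply: eq_bigr => t _; rewrite /vadd; ring. Qed.

Lemma dot_vzeror u : dot u (@vzero m) = 0.
Proof. by rewrite /dot big1 // => t _; rewrite /vzero; ring. Qed.

Lemma dot_voppl u v : dot (vopp u) v = - dot u v.
Proof. by rewrite /dot -big_Ropp; apply: eq_bigr => t _; rewrite /vopp; ring. Qed.

Lemma dot_vsubr u v w : dot u (vsub v w) = dot u v - dot u w.
Proof.
by rewrite /dot /Rminus -big_Ropp -big_split /=; apply: eq_bigr => t _; rewrite /vsub; ring.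
Qed.

Lemma dot_vscaler u v a : dot u (vscale a v) = a * dot u v.
Proof. by rewrite /dot -big_Rmult_l; apply: eq_bigr => t _; rewrite /vscale; ring. Qed.

Lemma dot_vsumr u a b (F : nat -> vec m) :
  dot u (vsum a b F) = rsum a b (fun j => dot u (F j)).
Proof. exact: (big_morph (dot u) (dot_vaddr u) (dot_vzeror u)). Qed.

Lemma dot_le_dual_norm (N dn : vec m -> R) v d r :
  (forall a w, N (vscale a w) = Rabs a * N w) -> is_dual_norm N dn ->
  0 < r -> N d <= r -> dot v d <= r * dn v.
Proof.
move=> N_scale dual_dn r_gt0 Nd_le.
have unit_d : N (vscale (/ r) d) <= 1.
  rewrite N_scale Rabs_right; last by apply/Rle_ge/Rlt_le/Rinv_0_lt_compat.
  apply: (Rmult_le_reg_l r) => //; rewrite -Rmult_assoc Rinv_r; lra.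
have [ub_dn _] := dual_dn v.
have := ub_dn _ (ex_intro _ _ (conj unit_d erefl)).
rewrite dot_vscaler => dn_ge.
apply: (Rmult_le_reg_l (/ r)); first exact: Rinv_0_lt_compat.
rewrite -Rmult_assoc Rinv_l; lra.
Qed.

End Dot.

Lemma rsum_le a b (F G : nat -> R) :
  (forall i, (a <= i < b)%nat -> F i <= G i) -> rsum a b F <= rsum a b G.
Proof.
move=> FG; rewrite /rsum big_seq_cond [X in _ <= X]big_seq_cond.
apply: (big_ind2 (fun x y => x <= y)) => [|x1 x2 y1 y2|i /andP[i_in _]]; try lra.
by apply: FG; rewrite -mem_index_iota.
Qed.

Lemma rsum_telescope_shift (a : nat -> R) K : (1 <= K)%nat ->
  rsum 2 K.+1 a - rsum 1 K a = a K - a 1%nat.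
Proof.
move=> K_ge1; rewrite /rsum.
have peel_last : \big[Rplus/0]_(1 <= i < K.+1) a i = \big[Rplus/0]_(1 <= i < K) a i + a K.
  by rewrite big_nat_recr.
have peel_first : \big[Rplus/0]_(1 <= i < K.+1) a i = a 1%nat + \big[Rplus/0]_(2 <= i < K.+1) a i.
  by rewrite big_ltn.
lra.
Qed.

Lemma rsum_exchange_triangle K (F : nat -> nat -> R) :
  rsum 1 K (fun i => rsum i.+1 K.+1 (F i)) =
  rsum 2 K.+1 (fun j => rsum 1 j (fun i => F i j)).
Proof.
rewrite /rsum.
transitivity (\big[Rplus/0]_(1 <= i < K)
                \big[Rplus/0]_(2 <= j < K.+1 | (i < j)%nat) F i j).
  apply: eq_big_nat => i /andP[i_ge1 _].
  by rewrite (@big_nat_widenl _ _ _ i.+1 2) //; apply: eq_bigl => j; rewrite andTb.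
rewrite (exchange_big_dep_nat xpredT) //=.
apply: eq_big_nat => j /andP[_ j_le].
by rewrite (@big_nat_widen _ _ _ 1 j K) //; apply: eq_bigl => i; rewrite andTb.
Qed.

Section Lagrangian.

Variables (n : nat -> nat) (k : nat) (f : forall i j : nat, vec (n j) -> vec (n i)).
Variables (nu z : forall i : nat, vec (n i)).

Definition lagrangian_term (i : nat) : R :=
  dot (vopp (nu i)) (z i) + rsum i.+1 k.+1 (fun j => dot (nu j) (f j i (z i))).

Lemma lagrangian_term_le_chi_star i hi :
  chi_star_le k f (vopp (nu i)) nu hi -> lagrangian_term i <= hi.
Proof. by apply; exists (z i). Qed.

Lemma rsum_lagrangian_feasible :
  (1 <= k)%nat ->
  (forall i, (2 <= i)%nat -> (i <= k)%nat -> z i = vsum 1 i (fun j => f i j (z j))) ->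
  rsum 1 k lagrangian_term = dot (nu k) (z k) - dot (nu 1%nat) (z 1%nat).
Proof.
move=> k_ge1 feasible.
set a := fun j => dot (nu j) (z j).
have -> : rsum 1 k lagrangian_term =
          - rsum 1 k a + rsum 1 k (fun i => rsum i.+1 k.+1 (fun j => dot (nu j) (f j i (z i)))).
  rewrite /rsum -big_Ropp -big_split /=; apply: eq_bigr => i _.
  by rewrite /lagrangian_term dot_voppl.
rewrite rsum_exchange_triangle.
have -> : rsum 2 k.+1 (fun j => rsum 1 j (fun i => dot (nu j) (f j i (z i)))) = rsum 2 k.+1 a.
  apply: eq_big_nat => j /andP[j_ge2 j_le].
  by rewrite /a (feasible j j_ge2 j_le) dot_vsumr.
have := rsum_telescope_shift a k k_ge1; rewrite /a /=; lra.
Qed.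

End Lagrangian.

Theorem theorem1
  (k : nat) (hk : (2 <= k)%nat)
  (n : nat -> nat) (hn : forall i, (1 <= i)%nat -> (i <= k)%nat -> (0 < n i)%nat)
  (f : forall i j : nat, vec (n j) -> vec (n i))
  (N : vec (n 1%nat) -> R) (hN : is_norm N)
  (dn : vec (n 1%nat) -> R) (hdn : is_dual_norm N dn)
  (x : vec (n 1%nat)) (eps : R) (heps : 0 < eps)
  (c : vec (n k))
  (g : forall i j : nat, vec (n j) -> vec (n i))
  (h : forall i : nat, (forall j : nat, vec (n j)) -> R)
  (hh : forall i, (1 <= i)%nat -> (i <= k - 1)%nat ->
        forall nu : forall j : nat, vec (n j),
          nu i = vsum i.+1 k.+1 (fun j => g i j (nu j)) ->
          chi_star_le k f (vopp (nu i)) nu (h i nu))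
  (nu : forall j : nat, vec (n j))
  (hnuk : nu k = vopp c)
  (hnui : forall i, (1 <= i)%nat -> (i <= k - 1)%nat ->
          nu i = vsum i.+1 k.+1 (fun j => g i j (nu j)))
  (z : forall i : nat, vec (n i))
  (hz1 : N (vsub (z 1%nat) x) <= eps)
  (hz : forall i, (2 <= i)%nat -> (i <= k)%nat ->
        z i = vsum 1 i (fun j => f i j (z j))) :
  dot c (z k) >=
    - dot (nu 1%nat) x - eps * dn (nu 1%nat) - rsum 1 k (fun i => h i nu).
Proof.
have k_ge1 : (1 <= k)%nat by exact: ltnW.
have dual_bound : rsum 1 k (lagrangian_term n k f nu z) <= rsum 1 k (fun i => h i nu).
  apply: rsum_le => i /andP[i_ge1 i_lt].
  have i_le : (i <= k - 1)%nat by rewrite leq_subRL.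
  exact/lagrangian_term_le_chi_star/(hh i i_ge1 i_le nu (hnui i i_ge1 i_le)).
rewrite rsum_lagrangian_feasible // hnuk dot_voppl in dual_bound.
have ball_bound : dot (nu 1%nat) (vsub (z 1%nat) x) <= eps * dn (nu 1%nat).
  by case: hN => _ [_ [N_scale _]]; exact: dot_le_dual_norm.
rewrite dot_vsubr in ball_bound.
lra.
Qed.
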